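(* Let $(\tau,\{\mathbf R_s\}_{s\in\mathcal S})$ be a feasible TWAVRP solution. Then for every ordered pair of distinct customers $(i,j)\in V_C\times V_C$ and every $(d_1,d_2)\in\mathbb R^2$ with $d_1+d_2>w_i+w_j$, at least one of the following holds: (a) for every $s\in\mathcal S$, $\mathbf R_s$ contains no $i$–$j$ path whose travel time under $\theta_s$ is $\ge d_1$; (b) for every $s\in\mathcal S$, $\mathbf R_s$ contains no $j$–$i$ path whose travel time under $\theta_s$ is $\ge d_2$.
   Context: Let $G=(V,A)$ be a directed graph with $V=\{0,1,\dots,n\}$; node $0$ is the depot and $V_C=V\setminus\{0\}$ is the set of customers. The depot has operating window $[e_0,\ell_0]$, vehicles have capacity $Q$, and each customer $i\in V_C$ has an exogenous time window $[e_i,\ell_i]$. A vector of operational parameters $\theta$ consists of arc costs $c_{ij}\ge 0$ and arc travel times $t_{ij}\ge0$ for $(i,j)\in A$, and demands $q_i\ge 0$ and service times $u_i\ge 0$ for $i\in V_C$. The customer set is partitioned as $V_C=V_{\mathrm{cont}}\cup V_{\mathrm{disc}}$ (disjoint). For $i\in V_{\mathrm{cont}}$ a width $w_i\ge0$ with $e_i\le \ell_i-w_i$ is given and $TW_i=\{[y,y+w_i]: e_i\le y\le \ell_i-w_i\}$. For $i\in V_{\mathrm{disc}}$, $TW_i=\{[\underline y_{i1},\bar y_{i1}],\dots,[\underline y_{iN_i},\bar y_{iN_i}]\}$ is a finite set of intervals with $\underline y_{ib}\le\bar y_{ib}$, none contained in another, ordered so that $e_i=\underline y_{i1}<\dots<\underline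 y_{iN_i}$ and $\bar y_{i1}<\dots<\bar y_{iN_i}=\ell_i$; for such $i$ define $w_i=\max_{b}(\bar y_{ib}-\underline y_{ib})$. A route set $\mathbf R=(R_1,\dots,R_m)$ is a collection of pairwise disjoint nonempty sequences $R_k=(R_{k,1},\dots,R_{k,n_k})$ of distinct customers (every customer with positive demand appearing in exactly one sequence). For a vector $\tau=(\tau_1,\dots,\tau_n)$ of closed intervals, $\mathcal X(\mathbf R,\tau;\theta)$ is the set of $\bm a\in\mathbb R^n_{\ge0}$ with: $a_{R_{k,1}}\ge e_0+t_{0,R_{k,1}}$ for all $k$; $a_{R_{k,l+1}}-a_{R_{k,l}}\ge t_{R_{k,l},R_{k,l+1}}+u_{R_{k,l}}$ for all $k$ and $1\le l\le n_k-1$; $a_{R_{k,n_k}}\le \ell_0-t_{R_{k,n_k},0}-u_{R_{k,n_k}}$ for all $k$; and $a_i\in\tau_i$ for all $i\in V_C$. We write $\mathbf R\in\mathcal R(\tau;\theta)$ if $\sum_{i\in R_k}q_i\le Q$ for every $k$ and $\mathcal X(\mathbf R,\tau;\theta)\neq\emptyset$. Finitely many scenarios $\theta_1,\dots,\theta_S$ are given, $\mathcal S=\{1,\dots,S\}$. A feasible TWAVRP solution is a pair $(\tau,\{\mathbf R_s\}_{s\in\mathcal S})$ with $\tau_i\in TW_i$ for all $i\in V_C$ and $\mathbf R_s\in\mathcal R(\tau;\theta_s)$ for all $s$. A route set $\mathbf R$ contains an $i$–$j$ path $\pi=(v_1,\dots,v_p)$ ($p\ge2$, $v_1=i$, $v_p=j$)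 if $\pi$ is a contiguous subsequence of some route $R_k$, i.e. $v_r=R_{k,l+r-1}$ for $r=1,\dots,p$ and some $k,l$. Its travel time under $\theta$ is $t(\pi)=\sum_{r=1}^{p-1}(t_{v_rv_{r+1}}+u_{v_r})$. *)

From Stdlib Require Import Reals Lra Lia List.
Import ListNotations.
Open Scope R_scope.

(* Nodes are natural numbers; node 0 is the depot, customers are 1..n. *)

Record Instance := mkInstance {
  n_cust : nat;
  e : nat -> R;               (* e 0 = depot opening, e i = customer window start *)
  l : nat -> R;               (* l 0 = depot closing, l i = customer window end *)
  Q : R;
  is_cont : nat -> bool;      (* true: i in V_cont ; false: i in V_disc *)
  w_cont : nat -> R;
  tw_disc : nat -> list (R * R)  (* the intervals [ylow_ib, yhigh_ib] for discrete customers *)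
}.

Definition is_customer (I : Instance) (i : nat) : Prop := (1 <= i <= n_cust I)%nat.

(* Operational parameters theta (one scenario). *)
Record Params := mkParams {
  cost : nat -> nat -> R;
  ttime : nat -> nat -> R;
  dem : nat -> R;
  serv : nat -> R
}.

Definition disc_width (L : list (R * R)) : R :=
  match L with
  | [] => 0
  | x :: L' => fold_right (fun p m => Rmax (snd p - fst p) m) (snd x - fst x) L'
  end.

Definition w (I : Instance) (i : nat) : R :=
  if is_cont I i then w_cont I i else disc_width (tw_disc I i).

(* Closed intervals are pairs (lower, upper). [tau_i \in TW_i] *)
Definition in_TW (I : Instance) (i : nat) (iv : R * R) : Prop :=
  if is_cont I i then
    e I i <= fst iv <= l I i - w_cont I i /\ snd iv = fst iv + w_cont I i
  else In iv (tw_disc I i).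

Definition in_interval (iv : R * R) (x : R) : Prop := fst iv <= x <= snd iv.

Definition wf_instance (I : Instance) : Prop :=
  forall i, is_customer I i ->
    if is_cont I i then
      0 <= w_cont I i /\ e I i <= l I i - w_cont I i
    else
      let L := tw_disc I i in
      L <> [] /\
      (forall p, In p L -> fst p <= snd p) /\
      (forall k k', (k < length L)%nat -> (k' < length L)%nat -> k <> k' ->
         ~ (fst (nth k' L (0,0)) <= fst (nth k L (0,0)) /\
            snd (nth k L (0,0)) <= snd (nth k' L (0,0)))) /\
      (forall k, (S k < length L)%nat ->
         fst (nth k L (0,0)) < fst (nth (S k) L (0,0)) /\
         snd (nth k L (0,0)) < snd (nth (S k) L (0,0))) /\
      fst (nth 0 L (0,0)) = e I i /\
      snd (nth (length L - 1) L (0,0)) = l I i.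

Definition wf_params (I : Instance) (th : Params) : Prop :=
  (forall i j, 0 <= cost th i j /\ 0 <= ttime th i j) /\
  (forall i, is_customer I i -> 0 <= dem th i /\ 0 <= serv th i).

(* A route set: list of routes, each a list of customers. *)
Definition RouteSet := list (list nat).

Definition is_route_set (I : Instance) (q : nat -> R) (Rt : RouteSet) : Prop :=
  (forall r, In r Rt -> r <> [] /\ forall v, In v r -> is_customer I v) /\
  NoDup (concat Rt) /\
  (forall i, is_customer I i -> q i > 0 -> exists r, In r Rt /\ In i r).

Definition load (q : nat -> R) (r : list nat) : R :=
  fold_right (fun v acc => q v + acc) 0 r.

Definition in_X (I : Instance) (Rt : RouteSet) (tau : nat -> R * R)
    (th : Params) (a : nat -> R) : Prop :=
  (forall i, is_customer I i -> 0 <= a i /\ in_interval (tau i) (a i)) /\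
  (forall r, In r Rt ->
     a (nth 0 r 0%nat) >= e I 0 + ttime th 0%nat (nth 0 r 0%nat) /\
     (forall k, (S k < length r)%nat ->
        a (nth (S k) r 0%nat) - a (nth k r 0%nat)
          >= ttime th (nth k r 0%nat) (nth (S k) r 0%nat) + serv th (nth k r 0%nat)) /\
     a (nth (length r - 1) r 0%nat)
       <= l I 0 - ttime th (nth (length r - 1) r 0%nat) 0%nat
          - serv th (nth (length r - 1) r 0%nat)).

Definition feasible_routes (I : Instance) (tau : nat -> R * R) (th : Params)
    (Rt : RouteSet) : Prop :=
  is_route_set I (dem th) Rt /\
  (forall r, In r Rt -> load (dem th) r <= Q I) /\
  exists a, in_X I Rt tau th a.

(* Feasible TWAVRP solution; scenarios are indexed 0..S-1. *)
Definition feasible_solution (I : Instance) (nS : nat) (theta : nat -> Params)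
    (tau : nat -> R * R) (Rs : nat -> RouteSet) : Prop :=
  (forall i, is_customer I i -> in_TW I i (tau i)) /\
  (forall s, (s < nS)%nat -> feasible_routes I tau (theta s) (Rs s)).

Definition contains_path (Rt : RouteSet) (i j : nat) (pi : list nat) : Prop :=
  (2 <= length pi)%nat /\ nth 0 pi 0%nat = i /\ nth (length pi - 1) pi 0%nat = j /\
  exists r pre suf, In r Rt /\ r = pre ++ pi ++ suf.

Fixpoint path_time (th : Params) (pi : list nat) : R :=
  match pi with
  | v1 :: ((v2 :: _) as rest) => ttime th v1 v2 + serv th v1 + path_time th rest
  | _ => 0
  end.

(* Along any path of a feasible route set the arrival times grow by at least
   the path's travel time, so an i-j path of scenario s1 forces a_j - a_i >= d1
   and a j-i path of scenario s2 forces b_i - b_j >= d2.  All four arrival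
   times lie in the common windows tau_i and tau_j, whose lengths are at most
   w_i and w_j, hence d1 + d2 <= (a_j - b_j) + (b_i - a_i) <= w_i + w_j. *)
From Stdlib Require Import Reals List Lra Lia Classical_Prop.
Open Scope R_scope.

Lemma path_time_le_telescope (th : Params) (a : nat -> R) (pi : list nat) :
  (1 <= length pi)%nat ->
  (forall k, (S k < length pi)%nat ->
     a (nth (S k) pi 0%nat) - a (nth k pi 0%nat)
       >= ttime th (nth k pi 0%nat) (nth (S k) pi 0%nat) + serv th (nth k pi 0%nat)) ->
  path_time th pi <= a (nth (length pi - 1) pi 0%nat) - a (nth 0 pi 0%nat).
Proof.
  induction pi as [|v1 rest IH]; simpl; intros Hlen Hstep; [lia|].
  destruct rest as [|v2 rest']; simpl; [lra|].
  assert (Hfirst := Hstep 0%nat ltac:(simpl; lia)).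
  assert (Hrest := IH ltac:(simpl; lia) (fun k Hk => Hstep (S k) ltac:(simpl in *; lia))).
  simpl in Hfirst, Hrest.
  replace (length rest' - 0)%nat with (length rest') in * by lia.
  lra.
Qed.

Lemma nth_infix {A : Type} (pre pi suf : list A) (d : A) (m : nat) :
  (m < length pi)%nat -> nth (length pre + m) (pre ++ pi ++ suf) d = nth m pi d.
Proof.
  intros Hm.
  rewrite app_nth2, Nat.add_comm, Nat.add_sub, app_nth1 by lia.
  reflexivity.
Qed.

Lemma path_time_le_arrival_gap I Rt tau th a i j pi :
  in_X I Rt tau th a -> contains_path Rt i j pi ->
  path_time th pi <= a j - a i.
Proof.
  intros [_ Hroutes] [Hlen [<- [<- [r [pre [suf [Hin ->]]]]]]].
  destruct (Hroutes _ Hin) as [_ [Hstep _]].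
  apply path_time_le_telescope; [lia|].
  intros k Hk.
  assert (Hk' : (S (length pre + k) < length (pre ++ pi ++ suf))%nat)
    by (rewrite !length_app; lia).
  specialize (Hstep _ Hk').
  rewrite <- Nat.add_succ_r, !nth_infix in Hstep by lia.
  exact Hstep.
Qed.

Lemma disc_width_ge L p : In p L -> snd p - fst p <= disc_width L.
Proof.
  destruct L as [|x L']; simpl; [tauto|].
  intros [<-|Hp]; induction L' as [|y L'' IH]; simpl in *.
  - lra.
  - eapply Rle_trans; [apply IH|apply Rmax_r].
  - tauto.
  - destruct Hp as [<-|Hp]; [apply Rmax_l|].
    eapply Rle_trans; [apply IH, Hp|apply Rmax_r].
Qed.

Lemma in_TW_length_le I i iv : in_TW I i iv -> snd iv - fst iv <= w I i.
Proof.
  unfold in_TW, w. destruct (is_cont I i).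
  - intros [_ Hsnd]. lra.
  - apply disc_width_ge.
Qed.

Lemma in_TW_diff_le I i iv x y :
  in_TW I i iv -> in_interval iv x -> in_interval iv y -> x - y <= w I i.
Proof.
  intros Htw [Hx1 Hx2] [Hy1 Hy2].
  pose proof (in_TW_length_le _ _ _ Htw). lra.
Qed.

Lemma opposite_path_times_le (I : Instance) (tau : nat -> R * R)
  (th1 th2 : Params) (Rt1 Rt2 : RouteSet) (i j : nat) (pi1 pi2 : list nat) :
  is_customer I i -> is_customer I j ->
  in_TW I i (tau i) -> in_TW I j (tau j) ->
  feasible_routes I tau th1 Rt1 -> feasible_routes I tau th2 Rt2 ->
  contains_path Rt1 i j pi1 -> contains_path Rt2 j i pi2 ->
  path_time th1 pi1 + path_time th2 pi2 <= w I i + w I j.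
Proof.
  intros Ci Cj TWi TWj [_ [_ [a Ha]]] [_ [_ [b Hb]]] P1 P2.
  pose proof (path_time_le_arrival_gap _ _ _ _ _ _ _ _ Ha P1).
  pose proof (path_time_le_arrival_gap _ _ _ _ _ _ _ _ Hb P2).
  destruct Ha as [Ha _], Hb as [Hb _].
  pose proof (in_TW_diff_le _ _ _ (b i) (a i) TWi (proj2 (Hb i Ci)) (proj2 (Ha i Ci))).
  pose proof (in_TW_diff_le _ _ _ (a j) (b j) TWj (proj2 (Ha j Cj)) (proj2 (Hb j Cj))).
  lra.
Qed.

Theorem mainTheorem4 (I : Instance) (nS : nat) (theta : nat -> Params)
  (tau : nat -> R * R) (Rs : nat -> RouteSet) :
  wf_instance I ->
  (forall s, (s < nS)%nat -> wf_params I (theta s)) ->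
  feasible_solution I nS theta tau Rs ->
  forall i j, is_customer I i -> is_customer I j -> i <> j ->
  forall d1 d2 : R, d1 + d2 > w I i + w I j ->
    (forall s, (s < nS)%nat -> forall pi,
       contains_path (Rs s) i j pi -> ~ (path_time (theta s) pi >= d1)) \/
    (forall s, (s < nS)%nat -> forall pi,
       contains_path (Rs s) j i pi -> ~ (path_time (theta s) pi >= d2)).
Proof.
  intros _ _ [HTW Hfeas] i j Ci Cj _ d1 d2 Hd.
  destruct (classic (forall s, (s < nS)%nat -> forall pi,
    contains_path (Rs s) i j pi -> ~ (path_time (theta s) pi >= d1))) as [Hno_ij|Hno_ij];
    [left; exact Hno_ij | right].
  intros s2 Hs2 pi2 P2 T2. apply Hno_ij.
  intros s1 Hs1 pi1 P1 T1.
  pose proof (opposite_path_times_le I tau (theta s1) (theta s2) (Rs s1) (Rs s2)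
    i j pi1 pi2 Ci Cj (HTW i Ci) (HTW j Cj) (Hfeas s1 Hs1) (Hfeas s2 Hs2) P1 P2).
  lra.
Qed.
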